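(* In the setting below, if $C$ is Euclidean LCD, then $l(x)=(x^m-1)/\mathrm{lcm}(g_{11}(x),g_{22}(x))$ is self-reciprocal.
   Context: Let $q$ be a prime power, $F=\mathbb{F}_q$, $m\ge1$ with $\gcd(q,m)=1$, and $R=F[x]/\langle x^m-1\rangle$; elements of $R$ are represented by polynomials of degree $<m$ and identified with their coefficient vectors in $F^m$. A quasi-cyclic code of length $2m$ and index $2$ is an $R$-submodule $C\subseteq R^2$. The Euclidean inner product of $(a_1,a_2),(b_1,b_2)\in R^2$ is the sum of the standard dot products of the coefficient vectors of $a_1,b_1$ and of $a_2,b_2$; $C$ is Euclidean LCD if $C\cap C^{\perp_e}=\{0\}$. For a nonzero polynomial $f$ of degree $k$, $f^*(x)=x^kf(x^{-1})$; $f$ is self-reciprocal if $f^*=\alpha f$ for some $\alpha\in F$. Suppose $C$ is generated as an $R$-module by $(g_{11}(x),g_{12}(x))$ and $(0,g_{22}(x))$, where $g_{11},g_{12},g_{22}\in F[x]$ satisfy: $g_{11}\mid x^m-1$, $g_{22}\mid x^m-1$, $\deg g_{12}<\deg g_{22}$, and $g_{11}g_{22}\mid (x^m-1)g_{12}$. *)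

From HB Require Import structures.
From mathcomp Require Import all_boot all_order all_algebra all_field.
Set Implicit Arguments. Unset Strict Implicit. Unset Printing Implicit Defensive.
Import GRing.Theory.
Local Open Scope ring_scope.

Section QC.
Variable F : fieldType.

Definition modxm (m : nat) (p : {poly F}) : {poly F} := p %% ('X^m - 1).

(* membership in the R-submodule of R^2 generated by (g11,g12) and (0,g22);
   codewords are pairs of reduced representatives *)
Definition in_qc2 (m : nat) (g11 g12 g22 : {poly F}) (c : {poly F} * {poly F}) : Prop :=
  exists f h : {poly F}, c = (modxm m (f * g11), modxm m (f * g12 + h * g22)).

Definition eip (m : nat) (c d : {poly F} * {poly F}) : F :=
  \sum_(i < m) (c.1`_i * d.1`_i + c.2`_i * d.2`_i).

Definition euclidean_LCD (m : nat) (g11 g12 g22 : {poly F}) : Prop :=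
  forall c, in_qc2 m g11 g12 g22 c ->
    (forall d, in_qc2 m g11 g12 g22 d -> eip m c d = 0) -> c = (0, 0).

(* reciprocal polynomial f^*(x) = x^(deg f) f(1/x) *)
Definition recip (f : {poly F}) : {poly F} :=
  \poly_(i < size f) f`_(size f - 1 - i).

Definition self_reciprocal (f : {poly F}) : Prop :=
  f != 0 /\ exists alpha : F, recip f = alpha *: f.

(* least common multiple of polynomials (defined up to a nonzero scalar) *)
Definition lcmp (p q : {poly F}) : {poly F} := (p * q) %/ gcdp p q.
End QC.

(* Let M = x^m - 1, L = lcm(g11, g22) and l = M / L; since q and m are coprime, M is
   separable, so l and L are coprime. Write [xinv f] for f(x^(m-1)), i.e. f(x^-1) in R.
   The Euclidean product of two reduced pairs is the coefficient of x^(m-1) in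
   a1 rev(b1) + a2 rev(b2), and rev(b) = x^(m-1) [xinv b] mod M, so pairs with
   M | a1 [xinv b1] + a2 [xinv b2] are orthogonal.
   For all a, b the pair (L a, L b) lies in C, and it is orthogonal to C as soon as l
   divides a [xinv g11] + b [xinv g12] and b [xinv g22]; the LCD property then forces
   l | a and l | b. This makes l coprime to [xinv g11] [xinv g22], hence to [xinv L].
   As l | M | [xinv M] = [xinv l] [xinv L], we get l | [xinv l], hence l | l^*, and a
   degree count gives l^* = alpha l. *)

From HB Require Import structures.
From mathcomp Require Import all_boot all_order all_algebra all_field.
From mathcomp Require Import fingroup cyclic zify ring.
Set Implicit Arguments. Unset Strict Implicit. Unset Printing Implicit Defensive.
Import GRing.Theory FinRing.Theory.
Local Open Scope ring_scope.

Section Polynomials.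
Variable F : fieldType.
Implicit Types p q r d a b : {poly F}.

Lemma dvdp_mulB d a a' b b' : d %| a - a' -> d %| b - b' -> d %| a * b - a' * b'.
Proof.
move=> da db; have -> : a * b - a' * b' = (a - a') * b + a' * (b - b') by ring.
by apply: dvdp_add; [apply: dvdp_mulr | apply: dvdp_mull].
Qed.

Lemma dvdp_addB d a a' b b' : d %| a - a' -> d %| b - b' -> d %| (a + b) - (a' + b').
Proof.
move=> da db; have -> : a + b - (a' + b') = (a - a') + (b - b') by ring.
exact: dvdp_add.
Qed.

Lemma lcmp_mul_gcdp p q : lcmp p q * gcdp p q = p * q.
Proof. by rewrite divpK // dvdp_mulr // dvdp_gcdl. Qed.

Lemma dvdp_lcmpl p q : p %| lcmp p q.
Proof. by rewrite /lcmp -divp_mulA ?dvdp_gcdr // dvdp_mulr. Qed.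

Lemma dvdp_lcmpr p q : q %| lcmp p q.
Proof. by rewrite /lcmp mulrC -divp_mulA ?dvdp_gcdl // dvdp_mulr. Qed.

Lemma dvdp_lcmp_mul p q : lcmp p q %| p * q.
Proof. by rewrite -lcmp_mul_gcdp dvdp_mulr. Qed.

(* [r gcd(p, q)] is a combination of [q r] and [p r], both multiples of [p q]. *)
Lemma dvdp_lcmp p q r : p != 0 -> p %| r -> q %| r -> lcmp p q %| r.
Proof.
move=> p_neq0 pr qr; have g_neq0 : gcdp p q != 0 by rewrite gcdp_eq0 negb_and p_neq0.
rewrite -(dvdp_mul2r _ _ g_neq0) lcmp_mul_gcdp.
have [[u v] /= uv] := Bezoutp p q.
rewrite -(eqp_dvdr _ (eqp_mull r uv)) mulrDr.
have -> : r * (u * p) = u * (p * r) by ring.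
have -> : r * (v * q) = v * (r * q) by ring.
by rewrite dvdp_add // dvdp_mull // dvdp_mul.
Qed.

Lemma dvdp_size_scale p q : p != 0 -> p %| q -> (size q <= size p)%N ->
  exists c, q = c *: p.
Proof.
move=> p_neq0 pq size_qp; have [->|q_neq0] := eqVneq q 0; first by exists 0; rewrite scale0r.
have /eqp_eq pq_lead : p %= q by rewrite -dvdp_size_eqp // eqn_leq size_qp dvdp_leq.
exists (lead_coef q / lead_coef p).
by rewrite mulrC -scalerA pq_lead scalerA mulVf ?scale1r // lead_coef_eq0.
Qed.

Lemma self_reciprocalP p : p != 0 -> p %| recip p -> self_reciprocal p.
Proof. by move=> p_neq0 p_recip; split; last apply: dvdp_size_scale; rewrite ?size_poly. Qed.

(* The pairs [(- t B, t A)] and then [(t, 0)], with [t = l / gcd(l, A G)],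
   show that this gcd divides [A] and then [1]. *)
Lemma coprimep_of_annihilators l A B G : l != 0 ->
  (forall a b, l %| a * A + b * B -> l %| b * G -> l %| a /\ l %| b) ->
  coprimep l (A * G).
Proof.
move=> l_neq0 annih; set d := gcdp l (A * G); set t := l %/ d.
have l_td : l = t * d by rewrite divpK // dvdp_gcdl.
have t_neq0 : t != 0 by apply: contra_neq l_neq0; rewrite l_td => ->; rewrite mul0r.
have [_ l_tA] : l %| - (t * B) /\ l %| t * A.
  apply: annih; first by rewrite (_ : _ + _ = 0) ?dvdp0 //; ring.
  by rewrite -mulrA l_td dvdp_mul2l // dvdp_gcdr.
have d_A : d %| A by rewrite -(dvdp_mul2l _ _ t_neq0) -l_td.
have [l_t _] : l %| t /\ l %| 0.
  apply: annih; last by rewrite mul0r dvdp0.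
  by rewrite mul0r addr0 l_td dvdp_mul2l.
by rewrite coprimep_def -dvdp1 -(dvdp_mul2l _ _ t_neq0) mulr1 -l_td.
Qed.

Definition rev_poly n p := \poly_(i < n) p`_(n.-1 - i).

Lemma recip_rev_poly p : recip p = rev_poly (size p) p.
Proof. by rewrite /recip /rev_poly subn1. Qed.

Lemma rev_polyE n p : rev_poly n p = \sum_(i < n) p`_i *: 'X^(n.-1 - i).
Proof.
rewrite /rev_poly poly_def (reindex_inj rev_ord_inj); apply: eq_bigr => i _ /=.
by have lt_in := ltn_ord i; congr (_`_ _ *: 'X^_); lia.
Qed.

End Polynomials.

Section XmSub1.
Variables (F : fieldType) (m : nat).
Hypothesis m_gt0 : (0 < m)%N.
Implicit Types p q a b : {poly F}.
Local Notation M := ('X^m - 1 : {poly F}).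

Definition xinv p := p \Po 'X^(m.-1).

Lemma Xm1_neq0 : M != 0.
Proof. by rewrite -size_poly_eq0 size_XnsubC. Qed.

Lemma dvdp_Xm1_XmM k : M %| 'X^(m * k) - 1.
Proof. by rewrite exprM [X in _ %| X]subrX1 dvdp_mulr. Qed.

Lemma dvdp_Xm1_xinv : M %| xinv M.
Proof.
rewrite /xinv comp_polyB comp_Xn_poly comp_polyC -exprM mulnC.
exact: dvdp_Xm1_XmM.
Qed.

Lemma xinvE n p : (size p <= n)%N -> xinv p = \sum_(i < n) p`_i *: 'X^(m.-1 * i).
Proof.
move=> size_p; rewrite /xinv comp_polyE.
rewrite (big_ord_widen n (fun i => p`_i *: 'X^(m.-1) ^+ i)) //.
rewrite big_mkcond; apply: eq_bigr => i _; rewrite exprM.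
by case: ltnP => // le_pi; rewrite nth_default ?scale0r.
Qed.

(* Termwise: [x^(n-1-i) - x^(n-1) x^((m-1) i) = x^(n-1-i) (1 - x^(m i))]. *)
Lemma dvdp_rev_poly_xinv n p : (size p <= n)%N ->
  M %| rev_poly n p - 'X^(n.-1) * xinv p.
Proof.
move=> size_p; rewrite rev_polyE (xinvE size_p) mulr_sumr -sumrB.
apply: (big_ind (fun r => M %| r)) => [|u v|i _]; [exact: dvdp0 | exact: dvdp_add |].
have lt_in := ltn_ord i.
have -> : 'X^(n.-1) * (p`_i *: 'X^(m.-1 * i)) = p`_i *: ('X^(n.-1 - i) * 'X^(m * i)).
  by rewrite -scalerAr -!exprD; congr (_ *: 'X^_); nia.
rewrite -scalerBr -{1}['X^(n.-1 - i)]mulr1 -mulrBr -mul_polyC !dvdp_mull //.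
by rewrite -dvdpNr opprB dvdp_Xm1_XmM.
Qed.

Lemma dvdp_recip_of_xinv p : p %| M -> p %| xinv p -> p %| recip p.
Proof.
move=> p_M p_xinv; rewrite -(subrK ('X^((size p).-1) * xinv p) (recip p)).
rewrite dvdp_add ?dvdp_mull // recip_rev_poly.
exact: dvdp_trans p_M (dvdp_rev_poly_xinv _).
Qed.

Lemma coef_mul_rev_poly a b : (a * rev_poly m b)`_(m.-1) = \sum_(i < m) a`_i * b`_i.
Proof.
rewrite coefM prednK //; apply: eq_bigr => i _; rewrite coef_poly.
by have lt_im := ltn_ord i; rewrite ifT; [congr (_ * b`_ _) | ]; lia.
Qed.

Lemma eip_coefE a1 a2 b1 b2 :
  eip m (a1, a2) (b1, b2) = (a1 * rev_poly m b1 + a2 * rev_poly m b2)`_(m.-1).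
Proof. by rewrite /eip coefD !coef_mul_rev_poly -big_split. Qed.

Lemma coef_Xm1_multiple p : (size p < 2 * m)%N -> M %| p -> p`_(m.-1) = 0.
Proof.
move=> size_p /dvdpP [q def_p]; rewrite def_p mulrBr mulr1 coefB coefMXn.
rewrite ifT; last by rewrite prednK.
have [->|q_neq0] := eqVneq q 0; first by rewrite coef0 subrr.
rewrite sub0r nth_default ?oppr0 //.
move: size_p; rewrite def_p size_mul ?Xm1_neq0 // size_XnsubC // addnS /=.
by rewrite mul2n -addnn ltn_add2r => ?; rewrite -ltnS prednK.
Qed.

Lemma eip_eq0 a1 a2 b1 b2 :
    (size a1 <= m)%N -> (size a2 <= m)%N -> (size b1 <= m)%N -> (size b2 <= m)%N ->
  M %| a1 * xinv b1 + a2 * xinv b2 -> eip m (a1, a2) (b1, b2) = 0.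
Proof.
move=> size_a1 size_a2 size_b1 size_b2 M_ab; rewrite eip_coefE.
apply: coef_Xm1_multiple.
  have size_mul_rev (a b : {poly F}) :
      (size a <= m)%N -> (size (a * rev_poly m b)%R < 2 * m)%N.
    move=> size_a; have : (size (rev_poly m b) <= m)%N := size_poly _ _.
    by have := size_polyMleq a (rev_poly m b); lia.
  by rewrite (leq_ltn_trans (size_polyD _ _)) // gtn_max !size_mul_rev.
set q := a1 * ('X^(m.-1) * xinv b1) + a2 * ('X^(m.-1) * xinv b2).
have M_q : M %| q.
  by rewrite /q mulrCA [a2 * _]mulrCA -mulrDr dvdp_mull.
rewrite -[X in _ %| X](subrK q) dvdp_add //.
by apply: dvdp_addB; apply: dvdp_mulB; rewrite ?subrr ?dvdp0 ?dvdp_rev_poly_xinv.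
Qed.

Lemma size_modxm p : (size (modxm m p) <= m)%N.
Proof. by have := ltn_modp p M; rewrite Xm1_neq0 size_XnsubC. Qed.

Lemma dvdp_sub_modxm p : M %| p - modxm m p.
Proof. by rewrite /modxm {1}(divp_eq p M) addrK dvdp_mull. Qed.

Lemma eq_modxm p q : M %| p - q -> modxm m p = modxm m q.
Proof. by move=> /dvdpP [k pq]; rewrite /modxm -(subrK q p) pq modpD modp_mull add0r. Qed.

Lemma eip_modxm_eq0 a1 a2 b1 b2 : M %| a1 * xinv b1 + a2 * xinv b2 ->
  eip m (modxm m a1, modxm m a2) (modxm m b1, modxm m b2) = 0.
Proof.
have xinv_cong b : M %| xinv b - xinv (modxm m b).
  by rewrite /xinv -comp_polyB (dvdp_trans dvdp_Xm1_xinv) ?dvdp_comp_poly ?dvdp_sub_modxm.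
move=> M_ab; apply: eip_eq0; rewrite ?size_modxm //.
rewrite -[X in _ %| X](subKr (a1 * xinv b1 + a2 * xinv b2)) dvdp_sub //.
by apply: dvdp_addB; apply: dvdp_mulB; rewrite ?dvdp_sub_modxm.
Qed.

End XmSub1.

Section Codewords.
Variables (F : fieldType) (m : nat).
Hypothesis m_gt0 : (0 < m)%N.
Variables g11 g12 g22 l L : {poly F}.
Hypothesis l_mul_L : l * L = 'X^m - 1.
Hypothesis g11_L : g11 %| L.
Hypothesis g22_L : g22 %| L.
Hypothesis coprime_l_L : coprimep l L.

Let bezout_mod_l g : g %| L -> exists u v, v * l = 1 - u * g.
Proof.
move=> g_L; have /Bezout_eq1_coprimepP [[u v] /= uv] : coprimep g l.
  by apply: (coprimep_dvdr g_L); rewrite coprimep_sym.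
by exists u, v; rewrite -uv; ring.
Qed.

Lemma in_qc2_mull a b : in_qc2 m g11 g12 g22 (modxm m (L * a), modxm m (L * b)).
Proof.
have [u [v vl]] := bezout_mod_l g11_L; have [u' [v' v'l]] := bezout_mod_l g22_L.
exists (L * a * u), (L * (b - a * u * g12) * u'); congr pair; apply: eq_modxm.
  have -> : L * a - L * a * u * g11 = L * a * (1 - u * g11) by ring.
  by rewrite -vl -l_mul_L; apply/dvdpP; exists (a * v); ring.
have -> : L * b - (L * a * u * g12 + L * (b - a * u * g12) * u' * g22) =
    L * (b - a * u * g12) * (1 - u' * g22) by ring.
by rewrite -v'l -l_mul_L; apply/dvdpP; exists ((b - a * u * g12) * v'); ring.
Qed.

Hypothesis LCD : euclidean_LCD m g11 g12 g22.

Lemma euclidean_LCD_dvdp a b :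
    l %| a * xinv m g11 + b * xinv m g12 -> l %| b * xinv m g22 ->
  l %| a /\ l %| b.
Proof.
move=> l_ab l_b.
have L_neq0 : L != 0.
  by apply: contra_neq (Xm1_neq0 F m_gt0); rewrite -l_mul_L => ->; rewrite mulr0.
have ortho d : in_qc2 m g11 g12 g22 d -> eip m (modxm m (L * a), modxm m (L * b)) d = 0.
  case=> f [h ->]; apply: eip_modxm_eq0 => //.
  rewrite /xinv !comp_polyM comp_polyD !comp_polyM -!/(xinv m _).
  set f' := xinv m f; set h' := xinv m h.
  have -> : L * a * (f' * xinv m g11) + L * b * (f' * xinv m g12 + h' * xinv m g22) =
      (f' * (a * xinv m g11 + b * xinv m g12) + h' * (b * xinv m g22)) * L by ring.
  by rewrite -l_mul_L dvdp_mul2r // dvdp_add // dvdp_mull.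
have [/modp_eq0P La /modp_eq0P Lb] := LCD (in_qc2_mull a b) ortho.
by rewrite -l_mul_L ![L * _]mulrC !dvdp_mul2r // in La Lb.
Qed.

End Codewords.

Lemma natr_card_finField (F : finFieldType) : #|F|%:R = 0 :> F.
Proof. by rewrite -cardsT -zmodXgE expg_cardG ?inE. Qed.

Lemma natr_coprime_card_neq0 (F : finFieldType) m : coprime #|F| m -> m%:R != 0 :> F.
Proof.
move=> co_Fm; have [p p_pr pcharFp] := finPcharP F.
have p_F : (p %| #|F|)%N by rewrite (dvdn_pcharf pcharFp) natr_card_finField.
by rewrite -(dvdn_pcharf pcharFp) -prime_coprime // (coprime_dvdl p_F co_Fm).
Qed.

Theorem lemma3p3 (F : finFieldType) (m : nat) (g11 g12 g22 : {poly F}) :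
  (0 < m)%N -> coprime #|F| m ->
  g11 %| 'X^m - 1 -> g22 %| 'X^m - 1 ->
  (size g12 < size g22)%N ->
  g11 * g22 %| ('X^m - 1) * g12 ->
  euclidean_LCD m g11 g12 g22 ->
  self_reciprocal (('X^m - 1) %/ lcmp g11 g22).
Proof.
move=> m_gt0 co_Fm g11_M g22_M _ _ LCD.
have M_neq0 := Xm1_neq0 F m_gt0.
have g11_neq0 : g11 != 0.
  by apply: contra_neq M_neq0 => g11_0; apply/eqP; rewrite -dvd0p -g11_0.
set L := lcmp g11 g22; set l := ('X^m - 1) %/ L.
have l_mul_L : l * L = 'X^m - 1 by rewrite divpK // dvdp_lcmp.
have l_neq0 : l != 0 by apply: contra_neq M_neq0; rewrite -l_mul_L => ->; rewrite mul0r.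
have l_M : l %| 'X^m - 1 by rewrite -l_mul_L dvdp_mulr.
have coprime_l_L : coprimep l L.
  have := separable_Xn_sub_1 (natr_coprime_card_neq0 co_Fm).
  by rewrite -l_mul_L separable_mul => /and3P [].
have LCD_l := euclidean_LCD_dvdp m_gt0 l_mul_L (dvdp_lcmpl g11 g22) (dvdp_lcmpr g11 g22)
  coprime_l_L LCD.
have coprime_l_xinvL : coprimep l (xinv m L).
  apply: coprimep_dvdl (coprimep_of_annihilators l_neq0 LCD_l).
  by rewrite /xinv -comp_polyM dvdp_comp_poly // dvdp_lcmp_mul.
apply: self_reciprocalP l_neq0 (dvdp_recip_of_xinv m_gt0 l_M _).
have := dvdp_trans l_M (dvdp_Xm1_xinv F m).
by rewrite -l_mul_L /xinv comp_polyM Gauss_dvdpl.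
Qed.
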